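(* There exist an environment $E$ and a total preorder $\succeq$ on $\Pi^E$ such that $\succeq\in\mathrm{Ord}_{\mathrm{RRL}}(E)$ but $\succeq\notin\mathrm{Ord}_{\mathrm{FTR}}(E)$. (Such an ordering can be obtained from an RRL specification with $\alpha>0$ and $F$ the Shannon entropy $F(p)=-\sum_a p(a)\log p(a)$.)
   Context: An environment is a tuple $E=(\mathcal S,\mathcal A,\mathcal T,\mathcal I)$ where $\mathcal S,\mathcal A$ are finite nonempty sets, $\mathcal T:\mathcal S\times\mathcal A\to\Delta(\mathcal S)$ and $\mathcal I\in\Delta(\mathcal S)$. A policy is a map $\pi:\mathcal S\to\Delta(\mathcal A)$ (stationary, possibly stochastic); $\Pi^E$ denotes the set of all policies. A trajectory $\xi=(s_0,a_0,s_1,a_1,\dots)\in\Xi:=\mathcal S\times(\mathcal A\times\mathcal S)^\omega$ is generated under $\pi$ by $s_0\sim\mathcal I$, $a_t\sim\pi(s_t)$, $s_{t+1}\sim\mathcal T(s_t,a_t)$; $\mathbb E^\pi_\xi$ denotes expectation under this distribution. An objective-specification formalism $X$ assigns to each environment $E$ a set of objective specifications, each inducing a total preorder $\succeq$ on $\Pi^E$; $\mathrm{Ord}_X(E)$ is the set of total preorders so induced. A specification defining a scalar $J:\Pi^E\to\mathbb R$ induces $\pi_1\succeq\pi_2\iff J(\pi_1)\ge J(\pi_2)$. RRL: specification $(\mathcal R,\alpha,F,\gamma)$ with $\mathcal R:\mathcal S\times\mathcal A\times\mathcal S\to\mathbb R$, $\alpha\in\mathbb R$, $F:\Delta(\mathcal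 A)\to\mathbb R$, $\gamma\in[0,1)$; $J(\pi)=\mathbb E^\pi_\xi[\sum_{t=0}^\infty\gamma^t(\mathcal R(s_t,a_t,s_{t+1})-\alpha F(\pi(s_t)))]$. FTR: specification $(f)$ with $f:\Xi\to\mathbb R$ Borel measurable (product topology on $\Xi$) such that $\mathbb E^\pi_\xi[f(\xi)]$ is well-defined and finite for every policy; $J(\pi)=\mathbb E^\pi_\xi[f(\xi)]$. *)

From HB Require Import structures.
From mathcomp Require Import all_boot all_order all_algebra.
From mathcomp Require Import all_classical all_reals all_analysis.

Set Implicit Arguments.
Unset Strict Implicit.
Unset Printing Implicit Defensive.

Import Order.TTheory GRing.Theory Num.Theory.
Local Open Scope classical_set_scope.
Local Open Scope ring_scope.

(* 'I_n.+1 is pointed (needed for the generated sigma-algebra type). *)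
HB.instance Definition _ (n : nat) := isPointed.Build 'I_n.+1 ord0.

(* Finite nonempty state set S = 'I_m.+1 and action set A = 'I_k.+1
   (every finite nonempty set is in bijection with such an ordinal). *)
Notation St m := 'I_m.+1.

Record dist (R : realType) (X : finType) := Dist {
  dprob :> X -> R;
  dprob_ge0 : forall x, 0 <= dprob x;
  dprob_sum1 : \sum_(x : X) dprob x = 1 }.

Record env (R : realType) (m k : nat) := Env {
  trans : St m -> St k -> dist R (St m);
  init : dist R (St m) }.

Definition policy (R : realType) (m k : nat) := St m -> dist R (St k).

Section Trajectories.
Variable R : realType.
Variables m k : nat.

(* Xi = S x (A x S)^omega : xi = (s_0, t |-> (a_t, s_{t+1})). *)
Definition Xi := (St m * (nat -> St k * St m))%type.

Definition st (xi : Xi) (t : nat) : St m :=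
  if t is t'.+1 then (xi.2 t').2 else xi.1.
Definition act (xi : Xi) (t : nat) : St k := (xi.2 t).1.

(* Product topology on Xi (discrete factors): basic open sets fix s_0 and
   finitely many coordinates (a_t, s_{t+1}). *)
Definition agree (n : nat) (x y : Xi) : Prop :=
  x.1 = y.1 /\ forall t, (t < n)%N -> x.2 t = y.2 t.
Definition xi_open (U : set Xi) : Prop :=
  forall x, U x -> exists n, [set y | agree n x y] `<=` U.

Local Notation XiM := (g_sigma_algebraType xi_open).

Definition cyl (n : nat) (s : nat -> St m) (a : nat -> St k) : set XiM :=
  [set xi | forall t, (t <= n)%N -> st xi t = s t /\ ((t < n)%N -> act xi t = a t)].

Definition cyl_prob (E : env R m k) (pi : policy R m k) (n : nat)
  (s : nat -> St m) (a : nat -> St k) : R :=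
  init E (s 0%N) *
  \prod_(t < n) (pi (s t) (a t) * trans E (s t) (a t) (s t.+1)).

(* P is the distribution of trajectories generated by pi in E:
   s_0 ~ I, a_t ~ pi(s_t), s_{t+1} ~ T(s_t,a_t). *)
Definition traj_law (E : env R m k) (pi : policy R m k)
  (P : probability XiM R) : Prop :=
  forall n s a, P (cyl n s a) = (cyl_prob E pi n s a)%:E.

Definition total_preorder (pref : policy R m k -> policy R m k -> Prop) : Prop :=
  (forall p, pref p p) /\
  (forall p q r, pref p q -> pref q r -> pref p r) /\
  (forall p q, pref p q \/ pref q p).

Definition rrl_return (Rw : St m -> St k -> St m -> R) (alpha : R)
  (F : dist R (St k) -> R) (gamma : R) (pi : policy R m k) (xi : XiM) : R :=
  limn (fun n => \sum_(t < n)
     gamma ^+ t * (Rw (st xi t) (act xi t) (st xi t.+1) - alpha * F (pi (st xi t)))).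

Definition J_RRL Rw alpha F gamma (pi : policy R m k) (P : probability XiM R)
  : \bar R := (\int[P]_xi (rrl_return Rw alpha F gamma pi xi)%:E)%E.

Definition OrdRRL (E : env R m k) (pref : policy R m k -> policy R m k -> Prop)
  : Prop :=
  exists (Rw : St m -> St k -> St m -> R) (alpha : R)
         (F : dist R (St k) -> R) (gamma : R),
    0 <= gamma < 1 /\
    forall Pf : policy R m k -> probability XiM R,
      (forall pi, traj_law E pi (Pf pi)) ->
      forall p1 p2, pref p1 p2 <->
        (J_RRL Rw alpha F gamma p2 (Pf p2) <= J_RRL Rw alpha F gamma p1 (Pf p1))%E.

Definition OrdFTR (E : env R m k) (pref : policy R m k -> policy R m k -> Prop)
  : Prop :=
  exists f : XiM -> R,
    measurable_fun setT f /\
    forall Pf : policy R m k -> probability XiM R,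
      (forall pi, traj_law E pi (Pf pi)) ->
      (forall pi, (Pf pi).-integrable setT (EFin \o f)) /\
      (forall p1 p2, pref p1 p2 <->
        (\int[Pf p2]_xi (f xi)%:E <= \int[Pf p1]_xi (f xi)%:E)%E).

End Trajectories.

Notation XiM m k := (g_sigma_algebraType (@xi_open m k)).

(* Take the environment that visits state 0 once and then stays in the
   absorbing state 1.  With zero reward, gamma = 0 and the regulariser
   F(p) = p(0) p(1) (the entropy would do as well: all that matters is that F
   vanishes at point masses and is positive at the uniform distribution), the
   RRL objective is J(pi) = - F(pi(0)): the two deterministic choices at
   state 0 are equally good and strictly better than the uniform one.  For a
   trajectory return f, the policy playing action 0 at state 0 with
   probability p (and action 0 surely afterwards) has value
   p f(xi_1) + (1 - p) f(xi_0), which is affine in p; an affine function equal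
   at p = 0 and p = 1 is constant, so it cannot rank p = 1/2 strictly lower.
   Since FTR quantifies over trajectory laws, one is built for every policy:
   the image of the uniform measure on [0, 1) under a biased binary expansion
   whose t-th digit says whether v lies in the left part, of relative length
   pi(s_t)(0), of its current cell. *)

From HB Require Import structures.
From mathcomp Require Import all_boot all_order all_algebra.
From mathcomp Require Import all_classical all_reals all_analysis.
From mathcomp Require Import ring lra measurable_realfun.
Import Order.TTheory GRing.Theory Num.Theory.
Set Implicit Arguments.
Unset Strict Implicit.

Local Open Scope classical_set_scope.
Local Open Scope ring_scope.

Section BiasedDigits.
Variable R : realFieldType.
Implicit Types (c v L w : R) (cs : nat -> R) (b : nat -> bool).

Definition rescale c v := if v < c then v / c else (v - c) / (1 - c).

Definition unscale (d : bool) c v := if d then c * v else c + (1 - c) * v.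

Definition digit_weight (d : bool) c := if d then c else 1 - c.

Fixpoint digit cs v t : bool :=
  if t is t'.+1 then digit (fun i => cs i.+1) (rescale (cs 0%N) v) t'
  else v < cs 0%N.

Definition cell_len cs n b := \prod_(t < n) digit_weight (b t) (cs t).

Lemma digit_weight_ge0 d c : 0 <= c <= 1 -> 0 <= digit_weight d c.
Proof. by case: d => /=; lra. Qed.

Lemma cell_len_ge0 cs n b : (forall t, 0 <= cs t <= 1) -> 0 <= cell_len cs n b.
Proof. by move=> hc; apply: prodr_ge0 => i _; exact: digit_weight_ge0. Qed.

Lemma rescale_itv d c L w v : 0 <= c <= 1 -> 0 <= L -> 0 <= w -> L + w <= 1 ->
  [/\ 0 <= v < 1, (v < c) = d & L <= rescale c v < L + w] <->
  unscale d c L <= v < unscale d c L + digit_weight d c * w.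
Proof.
move=> /andP [c0 c1] L0 w0 Lw1; rewrite /rescale /unscale /digit_weight.
case: d.
- have [->|cp] : c = 0 \/ 0 < c by move: c0; rewrite le_eqVlt => /orP [/eqP <-|]; auto.
    by rewrite mul0r add0r; split; [case=> /andP [v0 _]; rewrite ltNge v0 | lra].
  set x := v / c; have vE : v = c * x by rewrite /x mulrC divfK // gt_eqF.
  split; first by case=> _ -> hx; rewrite vE; nra.
  move=> hv; have hx : L <= x < L + w by rewrite vE in hv; nra.
  have vc : v < c by rewrite vE; nra.
  by rewrite vc; split => //; rewrite vE; nra.
- have [->|cp] : c = 1 \/ c < 1 by move: c1; rewrite le_eqVlt => /orP [/eqP ->|]; auto.
    by rewrite subrr mul0r addr0; split; [case=> /andP [_ v1]; rewrite v1 | lra].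
  have c1p : 0 < 1 - c by lra.
  set x := (v - c) / (1 - c).
  have vE : v = c + (1 - c) * x by rewrite /x mulrC divfK ?gt_eqF //; ring.
  split.
    by case=> _ /negbT; rewrite -leNgt => vc; rewrite ltNge vc /= => hx; rewrite vE; nra.
  move=> hv; have hx : L <= x < L + w by rewrite vE in hv; nra.
  have vc : c <= v by rewrite vE; nra.
  by rewrite (ltNge v c) vc /=; split => //; rewrite vE; nra.
Qed.

Lemma rescale_ge0_lt1 c v : 0 <= c <= 1 -> 0 <= v < 1 -> 0 <= rescale c v < 1.
Proof.
move=> hc hv; rewrite -[1]add0r.
have [] // := (rescale_itv (v < c) v hc (lexx 0) ler01 ltac:(by rewrite add0r)).2.
by move: hc hv; rewrite /unscale /digit_weight; case: (ltP v c); lra.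
Qed.

Lemma cell_lenS cs n b : cell_len cs n.+1 b =
  digit_weight (b 0%N) (cs 0%N) * cell_len (fun i => cs i.+1) n (fun i => b i.+1).
Proof. by rewrite /cell_len big_ord_recl. Qed.

Lemma digit_cell cs n b : (forall t, 0 <= cs t <= 1) ->
  exists2 L, 0 <= L /\ L + cell_len cs n b <= 1 &
    forall v, (0 <= v < 1 /\ forall t, (t < n)%N -> digit cs v t = b t) <->
              L <= v < L + cell_len cs n b.
Proof.
elim: n cs b => [|n IH] cs b hc.
  exists 0; rewrite /cell_len big_ord0; first lra.
  by move=> v; rewrite add0r; split=> [[]|] //.
have [L [L0 Lw] HL] := IH (fun i => cs i.+1) (fun i => b i.+1) (fun t => hc t.+1).
have w0 := cell_len_ge0 n (fun i => b i.+1) (fun t => hc t.+1).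
have /andP [c0 c1] := hc 0%N.
exists (unscale (b 0%N) (cs 0%N) L); rewrite cell_lenS.
  by rewrite /unscale /digit_weight; case: (b 0%N); split; nra.
move=> v; rewrite -(rescale_itv _ _ (hc 0%N) L0 w0 Lw).
split=> [[hv hd]|[hv hd0 /HL [hr hd]]].
  split=> //; first exact: hd 0%N isT.
  by apply/HL; split=> [|t tn]; [exact: rescale_ge0_lt1 | exact: (hd t.+1 tn)].
by split=> // -[|t] tn //; exact: hd.
Qed.

Lemma digit_bias1 cs v t : (forall i, cs i = 1) -> 0 <= v < 1 -> digit cs v t.
Proof.
elim: t cs v => [|t IH] cs v hc hv /=; first by rewrite hc; case/andP: hv.
apply: IH => [i|]; first exact: hc.
by apply: rescale_ge0_lt1 => //; rewrite hc ler01 lexx.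
Qed.

End BiasedDigits.

Lemma ord2P (x : 'I_2) : x = ord0 \/ x = ord_max.
Proof. by case: x => [[|[|//]] hx]; [left|right]; exact: val_inj. Qed.

Lemma measurable_cst_set d (T : measurableType d) (P : Prop) :
  measurable [set _ : T | P].
Proof.
have [p|np] := pselect P.
  by have -> : [set _ : T | P] = setT by rewrite predeqE.
by have -> : [set _ : T | P] = set0 by rewrite predeqE.
Qed.

Section TwoPoints.
Variable R : realType.

Lemma sum_ord2 (F : 'I_2 -> R) : \sum_x F x = F ord0 + F ord_max.
Proof. by rewrite big_ord_recl big_ord1; congr (_ + F _); exact: val_inj. Qed.

Definition bdist (p : R) (hp : 0 <= p <= 1) : dist R 'I_2.
Proof.
refine (@Dist R 'I_2 (fun x => if x == ord0 then p else 1 - p) _ _).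
  by move=> x; case: ifP; lra.
by rewrite sum_ord2 /=; lra.
Defined.

Lemma dist_ord_max (d : dist R 'I_2) : d ord_max = 1 - d ord0.
Proof. by have := dprob_sum1 d; rewrite sum_ord2; lra. Qed.

Lemma dist_ge0_le1 (d : dist R 'I_2) x : 0 <= d x <= 1.
Proof.
have := dprob_ge0 d ord0; have := dprob_ge0 d ord_max; rewrite dist_ord_max.
by case: (ord2P x) => ->; rewrite ?dist_ord_max; lra.
Qed.

Lemma digit_weight_dist (d : dist R 'I_2) x :
  digit_weight (x == ord0) (d ord0) = d x.
Proof. by case: (ord2P x) => -> //=; rewrite dist_ord_max. Qed.

Lemma zero_in01 : 0 <= (0 : R) <= 1. Proof. lra. Qed.
Lemma one_in01 : 0 <= (1 : R) <= 1. Proof. lra. Qed.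
Lemma half_in01 : 0 <= (2^-1 : R) <= 1. Proof. lra. Qed.

End TwoPoints.

Section SampledTrajectories.
Variable R : realType.
Implicit Types (pi : policy R 1 1) (u : R) (b : nat -> bool).

(* Start in state 0; every transition leads to the absorbing state 1. *)
Definition once_env : env R 1 1 :=
  Env (fun _ _ => bdist (zero_in01 R)) (bdist (one_in01 R)).

(* Under [once_env] the state at time [t] is 0 for [t = 0] and 1 afterwards. *)
Definition action0_prob pi (t : nat) : R :=
  pi (if t is 0 then ord0 else ord_max) ord0.

Lemma action0_prob_ge0_le1 pi t : 0 <= action0_prob pi t <= 1.
Proof. exact: dist_ge0_le1. Qed.

Definition unit_itv : set R := `[0, 1[%classic.

Lemma unit_itvE u : unit_itv u = (0 <= u < 1).
Proof. by rewrite /unit_itv /= in_itv. Qed.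

(* [unif01] does not see [u] outside [0, 1); there the digits of 0 are used. *)
Definition clamp01 u := if 0 <= u < 1 then u else 0.

Definition sample_digits pi u := digit (action0_prob pi) (clamp01 u).

Definition traj_of_digits b : XiM 1 1 :=
  (ord0, fun t => (if b t then ord0 else ord_max, ord_max)).

(* The domain is [measurableTypeR R], the sigma-algebra of [lebesgue_measure],
   rather than the default one on [R], so that [distribution] applies. *)
Definition sample_traj pi (u : measurableTypeR R) : XiM 1 1 :=
  traj_of_digits (sample_digits pi u).

Definition digit_prefix pi n b :=
  [set u | forall t, (t < n)%N -> sample_digits pi u t = b t].

Lemma digit_prefix_unit_itv pi n b : exists L,
  digit_prefix pi n b `&` unit_itv =
  `[L, L + cell_len (action0_prob pi) n b[%classic.
Proof.
have [L _ HL] := digit_cell n b (action0_prob_ge0_le1 pi).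
exists L; apply/seteqP; split=> u /=; rewrite unit_itvE in_itv /=.
  move=> [hd hu]; apply/HL; split=> // t tn.
  by rewrite -hd // /sample_digits /clamp01 hu.
move=> /HL [hu hd]; split=> // t tn.
by rewrite /sample_digits /clamp01 hu hd.
Qed.

Lemma measurable_digit_prefix pi n b : measurable (digit_prefix pi n b).
Proof.
rewrite -(setIT (digit_prefix _ _ _)) -(setUCr unit_itv) setIUr.
apply: measurableU.
  by have [L ->] := digit_prefix_unit_itv pi n b; exact: measurable_itv.
rewrite (_ : _ `&` _ = ~` unit_itv `&`
    [set _ | forall t, (t < n)%N -> digit (action0_prob pi) 0 t = b t]).
  apply: measurableI; last exact: measurable_cst_set.
  by apply: measurableC; exact: measurable_itv.
have outside u : (~` unit_itv) u -> clamp01 u = 0.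
  by rewrite /setC /= unit_itvE /clamp01 => /negP/negbTE ->.
apply/seteqP; split=> u /= [hd hu].
  by split=> // t tn; rewrite -hd // /sample_digits outside.
by split=> // t tn; rewrite /sample_digits outside // hu.
Qed.

Lemma nth_mktuple_nat T n (f : nat -> T) x0 t :
  (t < n)%N -> nth x0 [tuple f i | i < n] t = f t.
Proof. by move=> tn; rewrite -[t]/(nat_of_ord (Ordinal tn)) nth_mktuple. Qed.

Lemma agree_traj_of_digits n b b' xi :
  (forall t, (t < n)%N -> b t = b' t) ->
  agree n (traj_of_digits b) xi -> agree n (traj_of_digits b') xi.
Proof. by move=> hb [h0 h]; split=> // t tn; rewrite -h //= hb. Qed.

(* An open set is a union of cylinders [agree n xi], and the cylinder around
   [sample_traj pi u] depends only on the first [n] digits of [u]. *)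
Lemma measurable_sample_traj pi : measurable_fun setT (sample_traj pi).
Proof.
apply: (@measurability _ _ _ _ setT (sample_traj pi) (@xi_open 1 1)) => //.
move=> _ [B oB <-]; rewrite setTI.
have -> : sample_traj pi @^-1` B = \bigcup_n \bigcup_(b in [set: n.-tuple bool])
    (digit_prefix pi n (nth false b) `&`
     [set _ | [set xi | agree n (traj_of_digits (nth false b)) xi] `<=` B]).
  apply/seteqP; split=> u /=.
    move=> /oB [n hn]; exists n => //.
    exists [tuple sample_digits pi u i | i < n] => //.
    split=> [t tn|xi]; first by rewrite nth_mktuple_nat.
    move=> /agree_traj_of_digits hxi; apply/hn/hxi => t tn.
    by rewrite nth_mktuple_nat.
  move=> [n _ [b _ [hd hB]]]; apply: hB.
  by split=> // t tn /=; rewrite hd.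
apply: bigcupT_measurable => n; apply: fin_bigcup_measurable => [|b _].
  exact: finite_finset.
by apply: measurableI; [exact: measurable_digit_prefix | exact: measurable_cst_set].
Qed.

Lemma measurable_unit_itv : measurable unit_itv.
Proof. exact: measurable_itv. Qed.

Definition unif01 := mrestr lebesgue_measure measurable_unit_itv.

Lemma unif01_setT : unif01 setT = 1%E.
Proof.
by rewrite /unif01 /mrestr setTI lebesgue_measure_itv /= lte_fin ltr01 oppr0 adde0.
Qed.

HB.instance Definition _ := Measure.on unif01.

HB.instance Definition _ := Measure_isProbability.Build _ _ _ unif01 unif01_setT.

Lemma unif01_digit_prefix pi n b :
  unif01 (digit_prefix pi n b) = (cell_len (action0_prob pi) n b)%:E.
Proof.
rewrite /unif01 /mrestr; have [L ->] := digit_prefix_unit_itv pi n b.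
have w0 := cell_len_ge0 n b (action0_prob_ge0_le1 pi).
rewrite lebesgue_measure_itv /= lte_fin; case: ifPn => [_|].
  by congr (_%:E); ring.
by rewrite -leNgt => hw; congr (_%:E); lra.
Qed.

HB.instance Definition _ pi :=
  isMeasurableFun.Build _ _ _ _ (sample_traj pi) (measurable_sample_traj pi).

Definition traj_prob pi : probability (XiM 1 1) R :=
  distribution unif01 (sample_traj pi).

Lemma traj_probE pi A : traj_prob pi A = unif01 (sample_traj pi @^-1` A).
Proof. by []. Qed.

Definition consistent_states n (s : nat -> 'I_2) :=
  s 0%N = ord0 /\ forall t, (0 < t <= n)%N -> s t = ord_max.

Lemma preimage_cyl pi n s a : consistent_states n s ->
  sample_traj pi @^-1` cyl n s a = digit_prefix pi n (fun t => a t == ord0).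
Proof.
move=> [s0 sS]; apply/seteqP; split=> u /= hu t tn.
  have [_ /(_ tn)] := hu t (ltnW tn).
  by rewrite /act /=; case: sample_digits => <-.
split=> [|tn']; first by case: t tn => [|t] tn /=; [rewrite s0 | rewrite sS].
by rewrite /act /= hu //; case: (ord2P (a t)) => ->.
Qed.

Lemma preimage_cyl_inconsistent pi n s a : ~ consistent_states n s ->
  sample_traj pi @^-1` cyl n s a = set0.
Proof.
move=> hs; apply/seteqP; split=> u //= hu; apply: hs; split.
  by have [<-] := hu 0%N isT.
by case=> [//|t] /andP [_ tn]; have [<-] := hu t.+1 tn.
Qed.

Lemma cyl_prob_once_env pi n s a : consistent_states n s ->
  cyl_prob once_env pi n s a =
  cell_len (action0_prob pi) n (fun t => a t == ord0).
Proof.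
move=> [s0 sS]; rewrite /cyl_prob /= s0 mul1r; apply: eq_bigr => i _.
have si : s i = if nat_of_ord i is 0 then ord0 else ord_max.
  by case: i => -[|i] hi //=; apply: sS => /=; exact: ltnW.
by rewrite (sS i.+1) ?ltn_ord //= subr0 mulr1 si /action0_prob digit_weight_dist.
Qed.

Lemma cyl_prob_once_env_inconsistent pi n s a : ~ consistent_states n s ->
  cyl_prob once_env pi n s a = 0.
Proof.
move=> hs; rewrite /cyl_prob /=.
have [s0|_] := eqVneq (s 0%N) ord0; last by rewrite subrr mul0r.
have [t /andP [t0 tn] st] : exists2 t, (0 < t <= n)%N & s t = ord0.
  apply: contrapT => hne; apply: hs; split; first exact: s0.
  move=> t ht; case: (ord2P (s t)) => // st; exfalso; apply: hne; exists t => //.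
case: t t0 tn st => [//|t] _ tn st.
by rewrite (bigD1 (Ordinal tn)) //= st eqxx mulr0 mul0r mulr0.
Qed.

Lemma traj_prob_law pi : traj_law once_env pi (traj_prob pi).
Proof.
move=> n s a; rewrite traj_probE.
have [hs|hs] := pselect (consistent_states n s).
  by rewrite preimage_cyl // unif01_digit_prefix cyl_prob_once_env.
by rewrite preimage_cyl_inconsistent // measure0 cyl_prob_once_env_inconsistent.
Qed.

End SampledTrajectories.

Lemma integrable_pushforward_comp d1 d2 (X : measurableType d1)
    (Y : measurableType d2) (R : realType) (phi : X -> Y)
    (mu : {measure set X -> \bar R}) (f : Y -> \bar R) :
  measurable_fun [set: X] phi -> measurable_fun [set: Y] f ->
  (pushforward mu phi).-integrable [set: Y] f ->
  mu.-integrable [set: X] (f \o phi).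
Proof.
move=> mphi mf /integrableP [_ hf]; apply/integrableP; split.
  exact: measurableT_comp.
have := ge0_integral_pushforward mphi mu measurableT
  (measurableT_comp (@abse_measurable R setT) mf) (fun y _ => abse_ge0 (f y)).
by rewrite preimage_setT => <-.
Qed.

Section InitialState.
Variables (R : realType) (m k : nat).

Lemma measurable_init_state (s : St m) :
  measurable [set xi : XiM m k | xi.1 = s].
Proof.
by apply: sub_sigma_algebra => xi hxi; exists 0%N => y [h _]; rewrite /= -h.
Qed.

Lemma measurable_fun_init_state (phi : St m -> \bar R) :
  measurable_fun [set: XiM m k] (fun xi => phi xi.1).
Proof.
move=> _ B mB; rewrite setTI.
have -> : (fun xi : XiM m k => phi xi.1) @^-1` B =
    \bigcup_(s in [set s | B (phi s)]) [set xi | xi.1 = s].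
  apply/seteqP; split=> [xi hB|xi [s hs hxi]]; first by exists xi.1.
  by rewrite /preimage /= hxi.
apply: fin_bigcup_measurable => [|s _]; first exact: finite_finset.
exact: measurable_init_state.
Qed.

Lemma traj_law_init (E : env R m k) pi (P : probability (XiM m k) R) s :
  traj_law E pi P -> P [set xi | xi.1 = s] = (init E s)%:E.
Proof.
move=> hP; rewrite (_ : [set xi | xi.1 = s] = cyl 0 (fun=> s) (fun=> ord0)).
  by rewrite hP /cyl_prob big_ord0 mulr1.
by apply/seteqP; split=> [xi <- [] //|xi /(_ 0%N isT) []].
Qed.

End InitialState.

Section RegularizedObjective.
Variable R : realType.
Local Open Scope ereal_scope.

Lemma rrl_return_gamma0 m k (Rw : St m -> St k -> St m -> R) alpha F
    (pi : policy R m k) (xi : XiM m k) :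
  rrl_return Rw alpha F 0 pi xi =
  (Rw (st xi 0) (act xi 0) (st xi 1) - alpha * F (pi (st xi 0)))%R.
Proof.
apply: norm_lim_near_cst; exists 1%N => // -[//|n] _ /=.
rewrite big_ord_recl /= expr0 mul1r big1 ?addr0 // => i _.
by rewrite exprS !mul0r.
Qed.

Definition bvar (d : dist R 'I_2) : R := (d ord0 * d ord_max)%R.

Lemma J_RRL_once_env (pi : policy R 1 1) (P : probability (XiM 1 1) R) :
  traj_law (once_env R) pi P ->
  J_RRL (fun _ _ _ => 0%R) 1%R bvar 0%R pi P = (- bvar (pi ord0))%:E.
Proof.
move=> hP; rewrite /J_RRL.
under eq_integral => xi _ do rewrite rrl_return_gamma0 sub0r mul1r.
have null_state1 : P [set xi | xi.1 = ord_max] = 0.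
  by rewrite (traj_law_init _ hP) /= subrr.
rewrite (@ae_eq_integral _ _ _ P setT (cst (- bvar (pi ord0))%:E)) //.
- by rewrite integral_cst // [X in (_ * X)%E]probability_setT mule1.
- exact: (measurable_fun_init_state (fun s => (- bvar (pi s))%:E)).
- exists [set xi | xi.1 = ord_max]; split=> //; first exact: measurable_init_state.
  move=> xi /= h; case: (ord2P xi.1) => // h1.
  by exfalso; apply: h => _; rewrite /= h1.
Qed.

End RegularizedObjective.

Section TrajectoryObjective.
Variable R : realType.
Implicit Types d : dist R 'I_2.
Local Open Scope ereal_scope.

Definition first_action_policy d : policy R 1 1 :=
  fun s => if s == ord0 then d else bdist (one_in01 R).

Definition first_action_traj (b : bool) : XiM 1 1 :=
  traj_of_digits (fun t => if t is 0 then b else true).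

Lemma sample_traj_first_action d u :
  sample_traj (first_action_policy d) u =
  first_action_traj (sample_digits (first_action_policy d) u 0).
Proof.
congr traj_of_digits; apply: funext => -[//|t]; rewrite /sample_digits /=.
apply: digit_bias1 => [i|]; first by rewrite /action0_prob /first_action_policy /=.
apply: rescale_ge0_lt1; first exact: action0_prob_ge0_le1.
by rewrite /clamp01; case: ifP => // _; rewrite lexx ltr01.
Qed.

Lemma unif01_first_digit d (b : bool) :
  unif01 (digit_prefix (first_action_policy d) 1 (fun=> b)) =
  (digit_weight b (d ord0))%:E.
Proof. by rewrite unif01_digit_prefix /cell_len big_ord1. Qed.

Lemma J_FTR_first_action d (f : XiM 1 1 -> R) :
  measurable_fun [set: XiM 1 1] f ->
  (traj_prob (first_action_policy d)).-integrable [set: XiM 1 1] (EFin \o f) ->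
  \int[traj_prob (first_action_policy d)]_xi (f xi)%:E =
  (f (first_action_traj true) * d ord0 +
   f (first_action_traj false) * (1 - d ord0))%:E.
Proof.
set pi := first_action_policy d => mf intf.
have mEf : measurable_fun [set: XiM 1 1] (EFin \o f) by exact/measurable_EFinP.
have mphi := measurable_sample_traj pi.
have int_comp := integrable_pushforward_comp mphi mEf intf.
transitivity (\int[@unif01 R]_(u in sample_traj pi @^-1` setT)
                (EFin \o f \o sample_traj pi) u).
  exact: integral_pushforward.
pose A b := digit_prefix pi 1 (fun=> b).
have mA b : measurable (A b) := measurable_digit_prefix pi 1 _.
have AUA : [set: measurableTypeR R] = A true `|` A false.
  apply/seteqP; split=> // u _.
  by case hb: (sample_digits pi u 0); [left|right] => -[].
have on_A b : {in A b, forall u,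
    (EFin \o f \o sample_traj pi) u = (f (first_action_traj b))%:E}.
  move=> u; rewrite inE => /(_ 0%N isT) hb.
  by rewrite /= sample_traj_first_action hb.
have disjA : [disjoint A true & A false].
  by apply/disj_setPS => u [/(_ 0%N isT) h1 /(_ 0%N isT)]; rewrite h1.
have mfA : measurable_fun (A true `|` A false) (EFin \o f \o sample_traj pi).
  by rewrite -AUA; exact: measurableT_comp.
rewrite preimage_setT AUA integral_setU; [|exact: mA..|exact: mfA|exact: disjA].
rewrite (eq_integral (cst (f (first_action_traj true))%:E)); last exact: on_A.
rewrite [X in _ + X](eq_integral (cst (f (first_action_traj false))%:E)).
  2: exact: on_A.
rewrite !integral_cst; [|exact: mA..].
rewrite EFinD !EFinM.
by congr (_ * _ + _ * _); exact: unif01_first_digit.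
Qed.

End TrajectoryObjective.

Lemma total_preorder_le (R : realType) m k (phi : policy R m k -> R) :
  total_preorder (fun p q => phi p <= phi q).
Proof.
split; first by move=> p; exact: lexx.
by split=> [p q r|p q]; [exact: le_trans | exact/orP/le_total].
Qed.

Definition bvar_pref (R : realType) (p q : policy R 1 1) :=
  bvar (p ord0) <= bvar (q ord0).

Lemma once_env_OrdRRL (R : realType) : OrdRRL (once_env R) (@bvar_pref R).
Proof.
exists (fun _ _ _ => 0), 1, (@bvar R), 0; split; first by rewrite lexx ltr01.
by move=> Pf hPf p q; rewrite !J_RRL_once_env // lee_fin lerN2.
Qed.

Lemma once_env_not_OrdFTR (R : realType) : ~ OrdFTR (once_env R) (@bvar_pref R).
Proof.
move=> [f [mf /(_ _ (@traj_prob_law R)) [int_f pref_f]]].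
pose pol (p : R) (hp : 0 <= p <= 1) := first_action_policy (bdist hp).
pose a := f (first_action_traj true); pose b := f (first_action_traj false).
have J (p : R) hp :
    (\int[traj_prob (pol p hp)]_xi (f xi)%:E = (a * p + b * (1 - p))%:E)%E.
  exact: J_FTR_first_action.
have ab : a = b.
  have := (pref_f (pol 1 (one_in01 R)) (pol 0 (zero_in01 R))).1.
  have := (pref_f (pol 0 (zero_in01 R)) (pol 1 (one_in01 R))).1.
  rewrite !J /bvar_pref /bvar /= !lee_fin; lra.
have := (pref_f (pol _ (half_in01 R)) (pol 1 (one_in01 R))).2.
rewrite !J /bvar_pref /bvar /= lee_fin ab; lra.
Qed.

Theorem mainTheorem15 (R : realType) :
  exists (m k : nat) (E : env R m k)
         (pref : policy R m k -> policy R m k -> Prop),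
    total_preorder pref /\ OrdRRL E pref /\ ~ OrdFTR E pref.
Proof.
exists 1%N, 1%N, (once_env R), (@bvar_pref R); split.
  exact: (total_preorder_le (fun p : policy R 1 1 => bvar (p ord0))).
by split; [exact: once_env_OrdRRL | exact: once_env_not_OrdFTR].
Qed.
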